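(* The line graph of the Petersen graph is vertex-transitive but not uniformly vertex-transitive.
   Context: The Petersen graph has as vertices the $2$-element subsets of $\{1,2,3,4,5\}$, adjacent iff disjoint. The line graph $L(\Gamma)$ has vertex set $E(\Gamma)$, two edges adjacent iff they share an endpoint. A permutation $\sigma$ of the vertex set is identified with its permutation matrix (the $(u,v)$ entry is $1$ iff $\sigma(u)=v$); $J_n$ is the $n\times n$ all-ones matrix. A graph on $n$ vertices is uniformly vertex-transitive if there is a set of $n$ distinct automorphisms $\{\sigma_1,\ldots,\sigma_n\}$ with $\sum_i\sigma_i=J_n$. *)

From HB Require Import structures.
From mathcomp Require Import all_boot all_order all_algebra all_fingroup.
Set Implicit Arguments. Unset Strict Implicit. Unset Printing Implicit Defensive.
Import GRing.Theory.

Definition is_aut (T : finType) (e : rel T) (s : {perm T}) : Prop :=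
  forall u v, e (s u) (s v) = e u v.

Definition vertex_transitive (T : finType) (e : rel T) : Prop :=
  forall u v : T, exists s : {perm T}, is_aut e s /\ s u = v.

Definition perm_matrix (T : finType) (s : {perm T}) : 'M[int]_#|T| :=
  (\matrix_(i, j) (s (enum_val i) == enum_val j)%:R)%R.

Definition uniformly_vertex_transitive (T : finType) (e : rel T) : Prop :=
  exists S : {set {perm T}},
    [/\ #|S| = #|T|, (forall s, s \in S -> is_aut e s) &
        (\sum_(s in S) perm_matrix s = const_mx 1)%R].

(* Petersen graph: vertices are 2-element subsets of {1,...,5} (here 'I_5 = {0,...,4}),
   adjacent iff disjoint *)
Definition PV := {A : {set 'I_5} | #|A| == 2}.
Definition petersen_adj : rel PV := fun A B => [disjoint val A & val B].

Definition PE := {E : {set PV} | (#|E| == 2) &&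
  [forall A in E, forall B in E, (A != B) ==> petersen_adj A B]}.

Definition line_petersen_adj : rel PE := fun E F =>
  (E != F) && (val E :&: val F != set0).

From mathcomp Require Import all_boot all_order all_algebra all_fingroup.
Set Implicit Arguments. Unset Strict Implicit. Unset Printing Implicit Defensive.
Import GRing.Theory Num.Theory.

(* The line graph of the Petersen graph is modelled on the vertices 0, ..., 14,
   where its automorphisms (the 120 induced by the permutations of {1, ..., 5})
   are enumerated by backtracking; vertex transitivity is then read off the list.
   A set of automorphisms whose permutation matrices sum to J is sharply
   transitive: for each v it contains exactly one automorphism F v sending a
   fixed base vertex to v, and F v, F w disagree at every vertex when v <> w.
   An exhaustive search through the list shows that no such 15 automorphisms
   exist. *)

Section Automorphisms.
Variables (T : finType) (e : rel T).

Lemma is_autV s : is_aut e s -> is_aut e s^-1.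
Proof. by move=> hs u v; rewrite -hs !permKV. Qed.

Lemma is_autM s t : is_aut e s -> is_aut e t -> is_aut e (s * t).
Proof. by move=> hs ht u v; rewrite !permM ht hs. Qed.

Lemma vertex_transitive_from (x0 : T) :
  (forall v, exists s, is_aut e s /\ s x0 = v) -> vertex_transitive e.
Proof.
move=> reach u v; have [su [hsu su0]] := reach u; have [sv [hsv sv0]] := reach v.
exists (su^-1 * sv)%g; split; first exact: is_autM (is_autV hsu) hsv.
by rewrite permM -su0 permK.
Qed.

Definition regular_aut_family (x0 : T) (F : T -> {perm T}) : Prop :=
  [/\ forall v, is_aut e (F v), forall v, F v x0 = v &
      forall v w x, F v x = F w x -> v = w].

Lemma perm_matrix_sum_unique (S : {set {perm T}}) (u v : T) :
  (\sum_(s in S) perm_matrix s = const_mx 1)%R ->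
  exists s, [/\ s \in S, s u = v & forall s', s' \in S -> s' u = v -> s' = s].
Proof.
move/matrixP/(_ (enum_rank u) (enum_rank v)); rewrite summxE mxE.
under eq_bigr do rewrite /perm_matrix mxE !enum_rankK.
case/natr_sum_eq1 => [s _|s [sS /eqP suv only_s]]; first exact: natr_nat.
have {}suv : s u = v by apply/eqP; case: (s u == v) suv.
exists s; split=> // s' s'S s'uv; apply/eqP/negPn/negP => s's.
by move: (only_s s' s's s'S); rewrite s'uv eqxx.
Qed.

Lemma uvt_regular_aut_family x0 :
  uniformly_vertex_transitive e -> exists F, regular_aut_family x0 F.
Proof.
case=> S [_ S_aut sumS].
have [F hF] := fin_all_exists (fun v => perm_matrix_sum_unique x0 v sumS).
exists (fun v => F v); split=> [v|v|v w x Fvw].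
- by have [/S_aut] := hF v.
- by have [] := hF v.
have [s [_ _ only_s]] := perm_matrix_sum_unique x (F v x) sumS.
have [FvS Fv0 _] := hF v; have [FwS Fw0 _] := hF w.
by rewrite -Fv0 -Fw0 (only_s _ FvS erefl) (only_s _ FwS (esym Fvw)).
Qed.

End Automorphisms.

Section Transport.
Variables (T T' : finType) (e : rel T) (e' : rel T') (f : T -> T') (g : T' -> T).
Hypotheses (fK : cancel f g) (gK : cancel g f).
Hypothesis f_adj : forall x y, e' (f x) (f y) = e x y.

Definition transport (s : {perm T}) : {perm T'} :=
  perm (inj_comp (can_inj fK) (inj_comp (@perm_inj _ s) (can_inj gK))).

Lemma transportE s x : transport s (f x) = f (s x).
Proof. by rewrite permE /= fK. Qed.

Lemma transport_aut s : is_aut e s -> is_aut e' (transport s).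
Proof. by move=> hs u v; rewrite -(gK u) -(gK v) !transportE !f_adj hs. Qed.

Lemma transport_vertex_transitive : vertex_transitive e -> vertex_transitive e'.
Proof.
move=> vt u v; have [s [hs suv]] := vt (g u) (g v).
exists (transport s); split; first exact: transport_aut.
by rewrite -{1}(gK u) transportE suv gK.
Qed.

Lemma transport_regular_aut_family x0 F :
  regular_aut_family e x0 F ->
  regular_aut_family e' (f x0) (fun v => transport (F (g v))).
Proof.
case=> F_aut F0 Fdiff; split=> [v|v|v w x].
- exact/transport_aut/F_aut.
- by rewrite transportE F0 gK.
by rewrite -(gK x) !transportE => /(can_inj fK)/Fdiff/(can_inj gK).
Qed.

End Transport.

Lemma ord_in_iota n (k : 'I_n) : val k \in iota 0 n.
Proof. by rewrite mem_iota ltn_ord. Qed.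

Lemma inord_eq n (a b : nat) :
  a <= n -> b <= n -> (inord a == inord b :> 'I_n.+1) = (a == b).
Proof. by move=> an bn; rewrite -val_eqE /= !inordK. Qed.

Definition upair_eq (T : Type) (r : rel T) (p q : T * T) : bool :=
  (r p.1 q.1 && r p.2 q.2) || (r p.1 q.2 && r p.2 q.1).

Definition upair_meet (T : Type) (r : rel T) (p q : T * T) : bool :=
  [|| r p.1 q.1, r p.1 q.2, r p.2 q.1 | r p.2 q.2].

Lemma eq_set2 (T : finType) (a b c d : T) :
  a != b -> ([set a; b] == [set c; d]) = upair_eq eq_op (a, b) (c, d).
Proof.
rewrite /upair_eq /= => ab; apply/eqP/idP => [abcd|]; last first.
  by case/orP=> /andP[/eqP-> /eqP->] //; exact: setUC.
have: (a \in [set c; d]) && (b \in [set c; d]) by rewrite -abcd set21 set22.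
rewrite !inE => /andP[/orP[]/eqP ac /orP[]/eqP bc];
  by move: ab; rewrite ac bc !eqxx ?orbT.
Qed.

Lemma set2I_neq0 (T : finType) (a b c d : T) :
  ([set a; b] :&: [set c; d] != set0) = upair_meet eq_op (a, b) (c, d).
Proof.
rewrite /upair_meet /=; apply/set0Pn/idP => [[x]|].
  by rewrite !inE => /andP[/orP[]/eqP-> /orP[]/eqP->]; rewrite eqxx ?orbT.
by case/or4P=> /eqP->; [exists c|exists d|exists c|exists d]; rewrite !inE eqxx ?orbT.
Qed.

Section PartialIsomorphisms.
Variables (n : nat) (adj : rel nat).

Definition consistent (y b : nat) (t bs : seq nat) : bool :=
  all (fun p => ((y == p.1) == (b == p.2)) && (adj y p.1 == adj b p.2)) (zip t bs).

Fixpoint partial_isos (bs : seq nat) : seq (seq nat) :=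
  if bs is b :: bs' then
    [seq y :: t | t <- partial_isos bs', y <- [seq y <- iota 0 n | consistent y b t bs']]
  else [:: [::]].

Lemma map_mem_partial_isos (g : nat -> nat) bs :
  {in bs, forall x, g x < n} -> {in bs &, forall x y, (g x == g y) = (x == y)} ->
  {in bs &, forall x y, adj (g x) (g y) = adj x y} -> map g bs \in partial_isos bs.
Proof.
elim: bs => [|b bs IH] //= g_lt g_eq g_adj.
have sub_bs x : x \in bs -> x \in b :: bs by rewrite inE => ->; rewrite orbT.
apply/allpairsPdep; exists (map g bs), (g b); split=> //.
  apply: IH => [x /sub_bs/g_lt //|x y /sub_bs xb /sub_bs|x y /sub_bs xb /sub_bs].
  - exact: g_eq.
  - exact: g_adj.
rewrite mem_filter mem_iota add0n g_lt ?mem_head // leq0n !andbT.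
apply/allP => -[y x] /=.
rewrite -{2}[bs]map_id zip_map => /mapP[z zbs [-> ->]] /=.
by rewrite g_eq ?g_adj ?mem_head ?sub_bs // !eqxx.
Qed.

End PartialIsomorphisms.

Section CompatibleChoice.
Variables (A B : eqType) (cands : A -> seq B) (compat : rel B).

(* Decides whether [cands v], [v] in [vs], admit pairwise compatible choices that are
   also compatible with [chosen]; the [if] keeps the search lazy under [vm_compute]. *)
Fixpoint compatible_choice (vs : seq A) (chosen : seq B) : bool :=
  if vs is v :: vs' then
    has (fun t => if all (compat t) chosen then compatible_choice vs' (t :: chosen)
                  else false) (cands v)
  else true.

Lemma compatible_choice_complete (F : A -> B) vs :
  uniq vs -> {in vs, forall v, F v \in cands v} ->
  {in vs &, forall v w, v != w -> compat (F v) (F w)} ->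
  forall chosen, {in vs, forall v, all (compat (F v)) chosen} ->
  compatible_choice vs chosen.
Proof.
elim: vs => [|v vs IH] //= /andP[vvs uvs] F_cands F_compat chosen F_chosen.
have sub_vs w : w \in vs -> w \in v :: vs by rewrite inE => ->; rewrite orbT.
apply/hasP; exists (F v); first exact/F_cands/mem_head.
rewrite F_chosen ?mem_head //; apply: IH => // [w /sub_vs|w w' /sub_vs + /sub_vs|w wvs].
- exact: F_cands.
- exact: F_compat.
rewrite /= F_chosen ?sub_vs // andbT F_compat ?mem_head ?sub_vs //.
by apply: contraNneq vvs => <-.
Qed.

End CompatibleChoice.

(* [((a, b), (c, d))] codes the Petersen edge between [{a, b}] and [{c, d}].  Read
   backwards the list is a breadth-first order of the line graph, which keeps
   [partial_isos] (it assigns the last vertex first) from exploding. *)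
Definition edge_codes : seq ((nat * nat) * (nat * nat)) :=
  [:: ((0, 2), (1, 3)); ((0, 3), (1, 2)); ((0, 3), (1, 4)); ((0, 2), (1, 4));
      ((0, 4), (1, 3)); ((0, 4), (1, 2)); ((1, 2), (3, 4)); ((0, 2), (3, 4));
      ((1, 3), (2, 4)); ((0, 3), (2, 4)); ((1, 4), (2, 3)); ((0, 4), (2, 3));
      ((0, 1), (3, 4)); ((0, 1), (2, 4)); ((0, 1), (2, 3))].

Definition edge_code (i : nat) : (nat * nat) * (nat * nat) :=
  nth ((0, 1), (2, 3)) edge_codes i.

Definition code_adj : rel nat := fun i j =>
  (i != j) && upair_meet (upair_eq eq_op) (edge_code i) (edge_code j).

Definition model_auts : seq (seq nat) := partial_isos 15 code_adj (iota 0 15).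

Definition aut_code_ok (t : seq nat) : bool :=
  [&& size t == 15, all (gtn 15) t, uniq t &
      all (fun i => all (fun j => code_adj (nth 0 t i) (nth 0 t j) == code_adj i j)
                        (iota 0 15)) (iota 0 15)].

Lemma model_auts_ok : all aut_code_ok model_auts.
Proof. by vm_compute. Qed.

Lemma model_auts_reach :
  all (fun v => has (fun t => nth 0 t 0 == v) model_auts) (iota 0 15).
Proof. by vm_compute. Qed.

Definition model_auts_from (v : nat) : seq (seq nat) :=
  [seq t <- model_auts | nth 0 t 0 == v].

Definition disagree : rel (seq nat) := all2 (fun x y => x != y).

Lemma no_disagreeing_choice :
  compatible_choice model_auts_from disagree (iota 0 15) [::] = false.
Proof. by vm_compute. Qed.

Definition model_adj : rel 'I_15 := fun i j => code_adj i j.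

Definition aut_code (s : {perm 'I_15}) : seq nat :=
  [seq val (s (inord x)) | x <- iota 0 15].

Lemma aut_code_mem s : is_aut model_adj s -> aut_code s \in model_auts.
Proof.
move=> s_aut; apply: map_mem_partial_isos => [x _|x y|x y]; first exact: ltn_ord.
  rewrite !mem_iota /= => x15 y15.
  by rewrite val_eqE (inj_eq perm_inj) -val_eqE /= !inordK.
rewrite !mem_iota /= => x15 y15.
by have := s_aut (inord x) (inord y); rewrite /model_adj /= !inordK.
Qed.

Lemma code_perm t : t \in model_auts ->
  exists s : {perm 'I_15}, is_aut model_adj s /\ forall i, val (s i) = nth 0 t i.
Proof.
move/(allP model_auts_ok)/and4P => [/eqP t15 /allP t_lt t_uniq /allP t_adj].
have nth_lt (i : 'I_15) : nth 0 t i < 15 by apply/t_lt/mem_nth; rewrite t15.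
pose h (i : 'I_15) : 'I_15 := inord (nth 0 t i).
have h_inj : injective h.
  move=> i j /(congr1 val); rewrite /= !inordK // => /eqP.
  by rewrite nth_uniq ?t15 // => /eqP/val_inj.
exists (perm h_inj); split=> [i j|i]; last by rewrite permE /= inordK.
rewrite !permE /model_adj /= !inordK //.
exact/eqP/(allP (t_adj _ (ord_in_iota i)))/ord_in_iota.
Qed.

Lemma model_vertex_transitive : vertex_transitive model_adj.
Proof.
apply: (vertex_transitive_from (x0 := ord0)) => v.
have /hasP[t t_autos /eqP t0] := allP model_auts_reach _ (ord_in_iota v).
have [s [s_aut sE]] := code_perm t_autos.
by exists s; split=> //; apply: val_inj; rewrite sE.
Qed.

Lemma model_no_regular_aut_family F : ~ regular_aut_family model_adj ord0 F.
Proof.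
case=> F_aut F0 Fdiff; pose C v := aut_code (F (inord v)).
suff: compatible_choice model_auts_from disagree (iota 0 15) [::].
  by rewrite no_disagreeing_choice.
apply: (compatible_choice_complete (F := C)) => [|v|v w|] //.
  rewrite mem_iota /= => v15.
  rewrite mem_filter aut_code_mem // andbT /C /aut_code /=.
  by rewrite -[inord 0]/(inord (val (@ord0 14))) inord_val F0 inordK.
rewrite !mem_iota => /andP[_ v15] /andP[_ w15] vw.
rewrite /disagree all2E !size_map eqxx zip_map; apply/allP => _ /mapP[x _ ->] /=.
apply: contra vw => /eqP/val_inj/Fdiff/(congr1 val).
by rewrite /= !inordK // => ->.
Qed.

Definition valid_vertex (p : nat * nat) : bool := [&& p.1 < 5, p.2 < 5 & p.1 != p.2].

Definition vertex_set (p : nat * nat) : {set 'I_5} := [set inord p.1; inord p.2].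

Lemma card_vertex_set p : valid_vertex p -> #|vertex_set p| == 2.
Proof. by case/and3P=> p1 p2 p12; rewrite cards2 inord_eq ?p12. Qed.

Definition vertex0 : PV := exist _ (vertex_set (0, 1)) (@card_vertex_set (0, 1) isT).

Definition pair_vertex (p : nat * nat) : PV := insubd vertex0 (vertex_set p).

Lemma val_pair_vertex p : valid_vertex p -> val (pair_vertex p) = vertex_set p.
Proof. by move=> vp; rewrite insubdK // unfold_in card_vertex_set. Qed.

Lemma pair_vertex_eq p q : valid_vertex p -> valid_vertex q ->
  (pair_vertex p == pair_vertex q) = upair_eq eq_op p q.
Proof.
move=> vp vq; rewrite -val_eqE !val_pair_vertex // eq_set2; last first.
  by case/and3P: vp => p1 p2; rewrite inord_eq.
by case/and3P: vp => ? ? _; case/and3P: vq => ? ? _; rewrite /upair_eq /= !inord_eq.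
Qed.

Lemma petersen_adj_pair p q : valid_vertex p -> valid_vertex q ->
  petersen_adj (pair_vertex p) (pair_vertex q) = ~~ upair_meet eq_op p q.
Proof.
move=> vp vq; rewrite /petersen_adj !val_pair_vertex // -setI_eq0 -[_ == _]negbK.
case/and3P: vp => ? ? _; case/and3P: vq => ? ? _.
by rewrite set2I_neq0 /upair_meet /= !inord_eq.
Qed.

Lemma vertex_code (A : PV) : exists p, valid_vertex p /\ A = pair_vertex p.
Proof.
have /cards2P[x [y [xy Axy]]] := valP A.
have vp : valid_vertex (val x, val y) by rewrite /valid_vertex !ltn_ord val_eqE.
exists (val x, val y); split=> //; apply: val_inj.
by rewrite val_pair_vertex // /vertex_set !inord_val -Axy.
Qed.

Lemma petersen_adj_neq A B : petersen_adj A B -> A != B.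
Proof.
apply: contraTneq => ->; rewrite /petersen_adj -setI_eq0 setIid -cards_eq0.
by rewrite (eqP (valP B)).
Qed.

Lemma petersen_edge_spec A B : petersen_adj A B ->
  (#|[set A; B]| == 2) &&
  [forall X in [set A; B], forall Y in [set A; B], (X != Y) ==> petersen_adj X Y].
Proof.
move=> AB; rewrite cards2 petersen_adj_neq //=.
have BA : petersen_adj B A by rewrite /petersen_adj disjoint_sym.
apply/forall_inP => X /set2P[]->; apply/forall_inP => Y /set2P[]->;
  by rewrite ?eqxx ?AB ?BA ?implybT.
Qed.

Definition valid_code (E : (nat * nat) * (nat * nat)) : bool :=
  [&& valid_vertex E.1, valid_vertex E.2 & ~~ upair_meet eq_op E.1 E.2].

Definition edge_set (E : (nat * nat) * (nat * nat)) : {set PV} :=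
  [set pair_vertex E.1; pair_vertex E.2].

Lemma edge_set_spec E : valid_code E ->
  (#|edge_set E| == 2) &&
  [forall X in edge_set E, forall Y in edge_set E, (X != Y) ==> petersen_adj X Y].
Proof. by case/and3P=> v1 v2 v12; apply: petersen_edge_spec; rewrite petersen_adj_pair. Qed.

Definition edge0 : PE :=
  exist _ (edge_set ((0, 1), (2, 3))) (@edge_set_spec ((0, 1), (2, 3)) isT).

Definition pair_edge (E : (nat * nat) * (nat * nat)) : PE := insubd edge0 (edge_set E).

Lemma val_pair_edge E : valid_code E -> val (pair_edge E) = edge_set E.
Proof. by move=> vE; rewrite insubdK // unfold_in edge_set_spec. Qed.

Lemma pair_edge_eq E F : valid_code E -> valid_code F ->
  (pair_edge E == pair_edge F) = upair_eq (upair_eq eq_op) E F.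
Proof.
move=> vE vF; rewrite -val_eqE !val_pair_edge // eq_set2; last first.
  by case/and3P: vE => v1 v2 v12; apply: petersen_adj_neq; rewrite petersen_adj_pair.
case/and3P: vE => ? ? _; case/and3P: vF => ? ? _.
by rewrite /upair_eq /= !pair_vertex_eq.
Qed.

Lemma line_adj_pair_edge E F : valid_code E -> valid_code F ->
  line_petersen_adj (pair_edge E) (pair_edge F) =
  (pair_edge E != pair_edge F) && upair_meet (upair_eq eq_op) E F.
Proof.
move=> vE vF; rewrite /line_petersen_adj !val_pair_edge // set2I_neq0.
case/and3P: vE => ? ? _; case/and3P: vF => ? ? _.
by rewrite /upair_meet /= !pair_vertex_eq.
Qed.

Lemma pair_edge_surj (X : PE) : exists E, valid_code E /\ X = pair_edge E.
Proof.
have /andP[/cards2P[A [B [AB XAB]]] X_adj] := valP X.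
have [p [vp eA]] := vertex_code A; have [q [vq eB]] := vertex_code B; subst A B.
have vE : valid_code (p, q).
  rewrite /valid_code vp vq -petersen_adj_pair //=.
  move/forall_inP: X_adj; rewrite XAB => /(_ _ (set21 _ _))/forall_inP.
  by move/(_ _ (set22 _ _))/implyP; apply.
by exists (p, q); split=> //; apply: val_inj; rewrite val_pair_edge.
Qed.

Lemma edge_codes_valid : all (fun i => valid_code (edge_code i)) (iota 0 15).
Proof. by vm_compute. Qed.

Lemma edge_codes_uniq :
  all (fun i => all (fun j =>
    upair_eq (upair_eq eq_op) (edge_code i) (edge_code j) ==> (i == j))
  (iota 0 15)) (iota 0 15).
Proof. by vm_compute. Qed.

Lemma edge_codes_cover :
  all (fun a => all (fun b => all (fun c => all (fun d =>
    valid_code ((a, b), (c, d)) ==>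
    has (fun i => upair_eq (upair_eq eq_op) (edge_code i) ((a, b), (c, d))) (iota 0 15))
  (iota 0 5)) (iota 0 5)) (iota 0 5)) (iota 0 5).
Proof. by vm_compute. Qed.

Definition code_edge (i : 'I_15) : PE := pair_edge (edge_code i).

Lemma code_edge_valid (i : 'I_15) : valid_code (edge_code i).
Proof. exact: (allP edge_codes_valid _ (ord_in_iota i)). Qed.

Lemma code_edge_eq i j : (code_edge i == code_edge j) = (i == j).
Proof.
rewrite pair_edge_eq ?code_edge_valid //; apply/idP/eqP => [|->]; last first.
  by rewrite /upair_eq !eqxx.
have := allP (allP edge_codes_uniq _ (ord_in_iota i)) _ (ord_in_iota j).
by move/implyP => ij /ij /eqP/val_inj.
Qed.

Lemma code_edge_adj i j : line_petersen_adj (code_edge i) (code_edge j) = model_adj i j.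
Proof. by rewrite line_adj_pair_edge ?code_edge_valid // code_edge_eq. Qed.

Lemma code_edge_surj X : exists i, code_edge i = X.
Proof.
have [[[a b] [c d]] [vE ->]] := pair_edge_surj X.
have in5 x : x < 5 -> x \in iota 0 5 by rewrite mem_iota.
have /and3P[/and3P[/in5 a5 /in5 b5 _] /and3P[/in5 c5 /in5 d5 _] _] := vE.
move: edge_codes_cover => /allP/(_ a a5)/allP/(_ b b5)/allP/(_ c c5)/allP/(_ d d5).
case/implyP/(_ vE)/hasP => i; rewrite mem_iota /= => i15 iE.
exists (Ordinal i15); apply/eqP.
by rewrite pair_edge_eq // (code_edge_valid (Ordinal i15)).
Qed.

Lemma code_edge_bij : bijective code_edge.
Proof.
have [g gK] := fin_all_exists code_edge_surj.
by exists g => // i; apply/eqP; rewrite -code_edge_eq gK.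
Qed.

Theorem mainTheorem8 :
  vertex_transitive line_petersen_adj /\
  ~ uniformly_vertex_transitive line_petersen_adj.
Proof.
have [phi codeK phiK] := code_edge_bij.
split.
  exact: transport_vertex_transitive codeK phiK code_edge_adj model_vertex_transitive.
case/(uvt_regular_aut_family (code_edge ord0)) => F F_reg.
have phi_adj x y : model_adj (phi x) (phi y) = line_petersen_adj x y.
  by rewrite -code_edge_adj !phiK.
have := transport_regular_aut_family phiK codeK phi_adj F_reg.
by rewrite codeK; apply: model_no_regular_aut_family.
Qed.
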